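(* Let $\Delta\in\mathcal{H}_{\ge3}$ be a hypergraph on $[d]$. There exists a unique point-line configuration $N$ on $[d]$ that is minimal, with respect to the dependency order, among all point-line configurations on $[d]$ in which every $3$-element subset of every edge of $\Delta$ is dependent.
   Context: A hypergraph on $[d]$ is a collection of subsets of $[d]$ (edges) none properly contained in another; $\mathcal{H}_{\ge3}$ is the set of hypergraphs all of whose edges have size at least $3$. A point-line configuration on $[d]$ is a simple matroid (no circuits of size $1$ or $2$) of rank at most $3$; its lines are the maximal subsets of size at least $3$ and rank $2$, and a $3$-subset is dependent iff it is contained in a line. Dependency order: $N_1\le N_2$ iff every dependent set of $N_1$ is dependent in $N_2$. *)

From mathcomp Require Import all_boot.
Set Implicit Arguments. Unset Strict Implicit. Unset Printing Implicit Defensive.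

Definition hypergraph (d : nat) (D : {set {set 'I_d}}) : Prop :=
  forall e f : {set 'I_d}, e \in D -> f \in D -> ~ (e \proper f).

Definition hypergraph_ge3 (d : nat) (D : {set {set 'I_d}}) : Prop :=
  hypergraph D /\ forall e : {set 'I_d}, e \in D -> 3 <= #|e|.

Definition is_matroid (d : nat) (I : {set {set 'I_d}}) : Prop :=
  [/\ set0 \in I,
      (forall A B : {set 'I_d}, A \subset B -> B \in I -> A \in I) &
      (forall A B : {set 'I_d}, A \in I -> B \in I -> #|A| < #|B| ->
         exists2 x, x \in B :\: A & x |: A \in I)].

Definition dependent (d : nat) (I : {set {set 'I_d}}) (X : {set 'I_d}) : Prop :=
  X \notin I.

Definition circuit (d : nat) (I : {set {set 'I_d}}) (C : {set 'I_d}) : Prop :=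
  dependent I C /\ forall X : {set 'I_d}, X \proper C -> ~ dependent I X.

Definition simple_matroid (d : nat) (I : {set {set 'I_d}}) : Prop :=
  forall C : {set 'I_d}, circuit I C -> #|C| != 1 /\ #|C| != 2.

Definition rank_le3 (d : nat) (I : {set {set 'I_d}}) : Prop :=
  forall A : {set 'I_d}, A \in I -> #|A| <= 3.

Definition point_line_config (d : nat) (I : {set {set 'I_d}}) : Prop :=
  [/\ is_matroid I, simple_matroid I & rank_le3 I].

Definition dep_le (d : nat) (N1 N2 : {set {set 'I_d}}) : Prop :=
  forall X : {set 'I_d}, dependent N1 X -> dependent N2 X.

Definition realizes_edges (d : nat) (D : {set {set 'I_d}}) (N : {set {set 'I_d}}) : Prop :=
  forall e S : {set 'I_d}, e \in D -> S \subset e -> #|S| = 3 -> dependent N S.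

Definition minimal_config (d : nat) (D : {set {set 'I_d}}) (N : {set {set 'I_d}}) : Prop :=
  [/\ point_line_config N, realizes_edges D N &
      forall M : {set {set 'I_d}}, point_line_config M -> realizes_edges D M -> dep_le M N -> M = N].

(* The dependency order on point-line configurations on [d] is the reverse of
   inclusion of their families of independent sets.  Any two configurations
   have every set of size at most 2 independent and all independent sets of
   size at most 3, so the union of their independent families still satisfies
   the augmentation axiom: it is again a configuration, and it realizes the
   edges of Delta whenever both do.  As the uniform matroid U(2,d) realizes
   every hypergraph, the union of all realizing configurations is a realizing
   configuration whose dependent sets are dependent in every other one; it is
   therefore the unique minimal one. *)
From mathcomp Require Import all_boot.
From Stdlib Require Import ClassicalEpsilon.
Set Implicit Arguments. Unset Strict Implicit. Unset Printing Implicit Defensive.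

Definition classicb (P : Prop) : bool := is_left (excluded_middle_informative P).

Lemma classicbP (P : Prop) : reflect P (classicb P).
Proof. by rewrite /classicb; case: excluded_middle_informative => h; constructor. Qed.

Lemma exists_greatest_set (T : finType) (P : {set T} -> Prop) (A0 : {set T}) :
  P A0 -> (forall A B, P A -> P B -> P (A :|: B)) ->
  exists2 N, P N & forall A, P A -> A \subset N.
Proof.
move=> PA0 PU.
have PA0b : classicb (P A0) by apply/classicbP.
case: (@arg_maxnP _ A0 (fun A => classicb (P A)) (fun A => #|A|) PA0b).
move=> N /classicbP PN Nmax.
exists N => // A PA.
have /eqP -> : N == A :|: N.
  by rewrite eqEcard subsetUr; apply: Nmax; apply/classicbP; apply: PU.
exact: subsetUl.
Qed.

Section Matroids.

Variable d : nat.
Implicit Types (I M N : {set {set 'I_d}}) (X : {set 'I_d}).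

Lemma dep_leE M N : dep_le M N <-> N \subset M.
Proof.
split=> [MN | /subsetP NM X]; last by apply: contra; apply: NM.
by apply/subsetP => X; apply: contraTT; apply: MN.
Qed.

Lemma simple_matroid_small_indep I X :
  is_matroid I -> simple_matroid I -> #|X| <= 2 -> X \in I.
Proof.
move=> [I0 _ _] simI leX2; apply: contraT => XnI.
pose P (Y : {set 'I_d}) := (Y \subset X) && (Y \notin I).
have PX : P X by rewrite /P subxx XnI.
case: (arg_minnP (fun Y : {set 'I_d} => #|Y|) PX) => C /andP[CX CnI] Cmin.
have circC : circuit I C.
  split=> // Y YC YnI; have := Cmin Y.
  rewrite /P (subset_trans (proper_sub YC) CX) YnI => /(_ isT).
  by rewrite leqNgt proper_card.
have [C_ne1 C_ne2] := simI C circC.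
have : #|C| <= 2 by apply: leq_trans (subset_leq_card CX) leX2.
case EC: #|C| C_ne1 C_ne2 => [|[|[|n]]] //= _ _ _.
by move/eqP: EC; rewrite cards_eq0 => /eqP C0; rewrite C0 I0 in CnI.
Qed.

Lemma matroidU (r : nat) I1 I2 :
  is_matroid I1 -> is_matroid I2 ->
  (forall X, X \in I1 :|: I2 -> #|X| <= r) ->
  (forall X, #|X| < r -> X \in I1 /\ X \in I2) ->
  is_matroid (I1 :|: I2).
Proof.
move=> [I1_0 down1 aug1] [_ down2 aug2] rkU small.
split; first by rewrite inE I1_0.
  move=> A B AB; rewrite !inE => /orP[] HB; apply/orP; [left|right].
    exact: down1 HB.
  exact: down2 HB.
move=> A B HA; rewrite inE => /orP[] HB ltAB.
- have ltAr : #|A| < r by apply: leq_trans ltAB (rkU _ _); rewrite inE HB.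
  have [x xBA xA] := aug1 A B (small A ltAr).1 HB ltAB.
  by exists x; rewrite // inE xA.
- have ltAr : #|A| < r by apply: leq_trans ltAB (rkU _ _); rewrite inE HB orbT.
  have [x xBA xA] := aug2 A B (small A ltAr).2 HB ltAB.
  by exists x; rewrite // inE xA orbT.
Qed.

Lemma simple_matroid_of_small_indep I :
  (forall X, #|X| <= 2 -> X \in I) -> simple_matroid I.
Proof.
move=> small C [CnI _].
by split; apply/eqP => EC; rewrite /dependent small ?EC in CnI.
Qed.

Lemma point_line_configU M1 M2 :
  point_line_config M1 -> point_line_config M2 -> point_line_config (M1 :|: M2).
Proof.
move=> [mat1 sim1 rk1] [mat2 sim2 rk2].
have small X : #|X| <= 2 -> X \in M1 /\ X \in M2.
  by move=> leX2; split; apply: simple_matroid_small_indep.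
have rkU : rank_le3 (M1 :|: M2).
  by move=> X; rewrite inE => /orP[]; [apply: rk1 | apply: rk2].
split; first exact: matroidU mat1 mat2 rkU small.
  by apply: simple_matroid_of_small_indep => X /small[XM1 _]; rewrite inE XM1.
exact: rkU.
Qed.

Lemma realizes_edgesU (D : {set {set 'I_d}}) M1 M2 :
  realizes_edges D M1 -> realizes_edges D M2 -> realizes_edges D (M1 :|: M2).
Proof.
move=> R1 R2 e S eD Se S3; rewrite /dependent inE negb_or.
by have := R1 e S eD Se S3; have := R2 e S eD Se S3; rewrite /dependent => -> ->.
Qed.

Definition uniform2 : {set {set 'I_d}} := [set X : {set 'I_d} | #|X| <= 2].

Lemma point_line_config_uniform2 : point_line_config uniform2.
Proof.
have small X : #|X| <= 2 -> X \in uniform2 by rewrite inE.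
split; last by move=> X; rewrite inE => /leq_trans; apply.
  split; first by rewrite inE cards0.
    by move=> A B AB; rewrite !inE; apply: leq_trans (subset_leq_card AB).
  move=> A B; rewrite !inE => leA2 leB2 ltAB.
  have /set0Pn[x xBA] : B :\: A != set0.
    by rewrite setD_eq0; apply: contraTN ltAB => /subset_leq_card; rewrite -leqNgt.
  exists x; rewrite // inE cardsU1.
  case: (x \in A) => /=; first exact: leA2.
  exact: leq_trans ltAB leB2.
exact: simple_matroid_of_small_indep.
Qed.

Lemma realizes_edges_uniform2 (D : {set {set 'I_d}}) : realizes_edges D uniform2.
Proof. by move=> e S _ _ S3; rewrite /dependent inE S3. Qed.

End Matroids.

Theorem mainTheorem4 (d : nat) (D : {set {set 'I_d}}) :
  hypergraph_ge3 D ->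
  exists N : {set {set 'I_d}},
    minimal_config D N /\ forall N', minimal_config D N' -> N' = N.
Proof.
move=> _.
pose realizing M := point_line_config M /\ realizes_edges D M.
have [N [plN RN] greatestN] : exists2 N, realizing N & forall M, realizing M -> M \subset N.
  apply: (exists_greatest_set (A0 := uniform2 d)).
    by split; [apply: point_line_config_uniform2 | apply: realizes_edges_uniform2].
  move=> M1 M2 [pl1 R1] [pl2 R2].
  by split; [apply: point_line_configU | apply: realizes_edgesU].
have minN : minimal_config D N.
  split=> // M plM RM /dep_leE NM.
  by apply/eqP; rewrite eqEsubset NM andbT greatestN.
exists N; split=> // N' [plN' RN' minN'].
by symmetry; apply: minN' => //; apply/dep_leE; apply: greatestN.
Qed.
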